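(* Consider two independent types of stations: for $l=1,2$, initial positions form a homogeneous Poisson point process on $\mathbb R^2$ of intensity $\lambda_l$, each station moves at speed $v_l$ in an independent uniform direction; let $\lambda=\lambda_1+\lambda_2$. Let $\mathcal H^l$ be the head point process of type-$l$ stations and $\mathcal L_e(v_1,v_2)=\{(t,L(t)):t\in\mathbb R\}$, $L(t)$ the distance to the origin of the nearest station (of either type) at time $t$. For $s\in\mathbb R$, $u>0$, $v>0$ let $E^{s,v}_u=\{(t,h):h>0,\ v^2(t-s)^2+h^2<u^2\}$. Then for every point $(s,u)$ lying on the radial bird of some station: (i) $(s,u)\in\mathcal L_e(v_1,v_2)$ if and only if $\mathcal H^l(E^{s,v_l}_u)=0$ for $l=1,2$; (ii) the event in (i) has probability $e^{-\lambda\pi u^2}$, i.e. $\mathbb P(\mathcal H^1(E^{s,v_1}_u)=0,\ \mathcal H^2(E^{s,v_2}_u)=0)=e^{-\lambda\pi u^2}$.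
   Context: The head $(T,H)$ of a type-$l$ station is the time and value of its minimal distance to the origin; its radial bird is $\{(t,(v_l^2(t-T)^2+H^2)^{1/2}):t\in\mathbb R\}$. $\mathcal H^l$ is a Poisson process of intensity $v_l\,dt\otimes2\lambda_l\,dh$, and $\mathcal H^1,\mathcal H^2$ are independent. *)

From HB Require Import structures.
From mathcomp Require Import all_boot all_order all_algebra.
From mathcomp Require Import all_classical all_reals all_analysis.
From mathcomp Require Import measurable_realfun.
Set Implicit Arguments. Unset Strict Implicit. Unset Printing Implicit Defensive.
Import Order.TTheory GRing.Theory Num.Theory.
Local Open Scope classical_set_scope.
Local Open Scope ring_scope.

(* The (t,h) half-plane carrying the head point processes, with Borel sets. *)
Definition plane (R : realType) := (measurableTypeR R * measurableTypeR R)%type.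

Definition leb2 (R : realType) : set (plane R) -> \bar R :=
  (@lebesgue_measure R \x @lebesgue_measure R)%E.

Definition head_intensity (R : realType) (v lam : R) (A : set (plane R)) : \bar R :=
  ((v * (2 * lam))%:E * leb2 (A `&` [set p : plane R | (0 < p.2)%R]))%E.

Definition npoints (R : realType) (S A : set (plane R)) : \bar R :=
  (\esum_(x in S `&` A) 1)%E.

Definition poisson_p (R : realType) (m : R) (k : nat) : R :=
  expR (- m) * m ^+ k / k`!%:R.

Definition poisson_pp (R : realType) (d : measure_display) (Omega : measurableType d)
  (P : probability Omega R) (N : Omega -> set (plane R))
  (mu : set (plane R) -> \bar R) : Prop :=
  (forall A : set (plane R), measurable A -> (mu A < +oo)%E ->
     measurable_fun [set: Omega] (fun w : Omega => (npoints (N w) A : \bar R)) /\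
     forall k : nat,
       P [set w | npoints (N w) A = k%:R%:E] = (poisson_p (fine (mu A)) k)%:E) /\
  (forall (n : nat) (A : 'I_n -> set (plane R)) (k : 'I_n -> nat),
     (forall i, measurable (A i)) -> (forall i, (mu (A i) < +oo)%E) ->
     (forall i j, i != j -> A i `&` A j = set0) ->
     P (\bigcap_(i in [set: 'I_n]) [set w | npoints (N w) (A i) = (k i)%:R%:E])
     = (\prod_(i < n) P [set w | npoints (N w) (A i) = (k i)%:R%:E])%E).

(* Independence of two point processes: the sigma-algebras generated by their
   counts are independent (tested on the generating pi-system of finite
   intersections of count events). *)
Definition indep_pp (R : realType) (d : measure_display) (Omega : measurableType d)
  (P : probability Omega R) (N1 N2 : Omega -> set (plane R)) : Prop :=
  forall (n m : nat) (A : 'I_n -> set (plane R)) (k : 'I_n -> \bar R)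
         (B : 'I_m -> set (plane R)) (j : 'I_m -> \bar R),
    (forall i, measurable (A i)) -> (forall i, measurable (B i)) ->
    let E1 := \bigcap_(i in [set: 'I_n]) [set w | npoints (N1 w) (A i) = k i] in
    let E2 := \bigcap_(i in [set: 'I_m]) [set w | npoints (N2 w) (B i) = j i] in
    P (E1 `&` E2) = (P E1 * P E2)%E.

Definition bird (R : realType) (v : R) (p : plane R) (t : R) : R :=
  Num.sqrt (v ^+ 2 * (t - p.1) ^+ 2 + p.2 ^+ 2).

Definition Ldist (R : realType) (v1 v2 : R) (S1 S2 : set (plane R)) (t : R) : R :=
  inf ([set bird v1 p t | p in S1] `|` [set bird v2 p t | p in S2]).

Definition envelope (R : realType) (v1 v2 : R) (S1 S2 : set (plane R)) : set (R * R) :=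
  [set (t, Ldist v1 v2 S1 S2 t) | t in [set: R]].

Definition on_some_bird (R : realType) (v1 v2 : R) (S1 S2 : set (plane R)) (s u : R) : Prop :=
  (exists2 p, S1 p & u = bird v1 p s) \/ (exists2 p, S2 p & u = bird v2 p s).

Definition Eset (R : realType) (s v u : R) : set (plane R) :=
  [set p | 0 < p.2 /\ v ^+ 2 * (p.1 - s) ^+ 2 + p.2 ^+ 2 < u ^+ 2].

From HB Require Import structures.
From mathcomp Require Import all_boot all_order all_algebra.
From mathcomp Require Import all_classical all_reals all_analysis.
From mathcomp Require Import measurable_realfun.
From mathcomp Require Import ring lra.
Set Implicit Arguments. Unset Strict Implicit. Unset Printing Implicit Defensive.
Import Order.TTheory GRing.Theory Num.Theory.
Import numFieldNormedType.Exports.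
Local Open Scope classical_set_scope.
Local Open Scope ring_scope.

(* A station's bird is below height [u] at time [s] exactly when its head lies in
   the half-ellipse [Eset s v u]; as heads have [h > 0] almost surely, [(s, u)] lies
   on the lower envelope iff neither head process charges its half-ellipse.  The
   half-ellipse has area [pi u^2 / (2 v)], hence intensity [lam pi u^2], so the
   Poisson void probabilities and the independence of the two processes give
   [exp (- lam1 pi u^2) exp (- lam2 pi u^2)]. *)

Lemma eq_inf_lbound (R : realType) (B : set R) (u : R) :
  has_lbound B -> B u -> u = inf B <-> lbound B u.
Proof.
move=> B_lb Bu; split=> [-> | u_lb]; first exact: ge_inf.
apply/eqP; rewrite eq_le lb_le_inf //=; last by exists u.
exact: ge_inf.
Qed.

Lemma npoints_eq0 (R : realType) (S A : set (plane R)) :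
  npoints S A = 0%E <-> S `&` A = set0.
Proof.
split=> [SA0|]; last by rewrite /npoints => ->; exact: esum_set0.
apply/seteqP; split=> // x SAx; suff : (1 <= npoints S A)%E by rewrite SA0 lee_fin ler10.
apply: esum_ge; exists [set x]; last by rewrite fsbig_set1.
by split; [exact: finite_set1 | move=> y ->].
Qed.

Lemma Eset_bird_lt (R : realType) (s v u : R) (p : plane R) :
  0 < u -> 0 < p.2 -> Eset s v u p <-> bird v p s < u.
Proof.
move=> u_gt0 p2_gt0; rewrite /Eset /bird -[u in _ < u]gtr0_norm // -sqrtr_sqr.
by rewrite ltr_sqrt ?exprn_gt0 // -opprB sqrrN; split=> [[]|].
Qed.

Lemma Eset_void_bird (R : realType) (S : set (plane R)) (s v u : R) :
  0 < u -> (forall p, S p -> 0 < p.2) ->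
  S `&` Eset s v u = set0 <-> forall p, S p -> u <= bird v p s.
Proof.
move=> u_gt0 S_pos; split=> [SE0 p Sp | u_lb]; last first.
  by apply/seteqP; split=> // p [Sp /(Eset_bird_lt s v u_gt0 (S_pos _ Sp))]; rewrite ltNge u_lb.
rewrite leNgt; apply/negP => /(Eset_bird_lt s v u_gt0 (S_pos _ Sp)) Ep.
by have : (S `&` Eset s v u) p by []; rewrite SE0.
Qed.

Lemma envelope_iff_void (R : realType) (v1 v2 : R) (S1 S2 : set (plane R)) (s u : R) :
  0 < u -> (forall p, S1 p -> 0 < p.2) -> (forall p, S2 p -> 0 < p.2) ->
  on_some_bird v1 v2 S1 S2 s u ->
  (s, u) \in envelope v1 v2 S1 S2 <->
  npoints S1 (Eset s v1 u) = 0%E /\ npoints S2 (Eset s v2 u) = 0%E.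
Proof.
move=> u_gt0 S1_pos S2_pos on_bird.
set B := [set bird v1 p s | p in S1] `|` [set bird v2 p s | p in S2].
have B_lb : has_lbound B by exists 0 => _ [[p _ <-]|[p _ <-]]; exact: sqrtr_ge0.
have Bu : B u by case: on_bird => -[p Sp ->]; [left|right]; exists p.
have -> : (s, u) \in envelope v1 v2 S1 S2 <-> u = inf B.
  by rewrite inE; split=> [[t _ [-> <-]] // | ->]; exists s.
rewrite eq_inf_lbound // !npoints_eq0 !Eset_void_bird //.
split=> [u_lb | [u_lb1 u_lb2] _ [[p Sp <-]|[p Sp <-]]]; [|exact: u_lb1|exact: u_lb2].
by split=> p Sp; apply: u_lb; [left|right]; exists p.
Qed.

Lemma xsection_Eset (R : realType) (s v u x : R) :
  xsection (Eset s v u) x = `]0, Num.sqrt (u ^+ 2 - v ^+ 2 * (x - s) ^+ 2)[%classic.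
Proof.
rewrite /xsection /Eset; apply/seteqP; split=> h /=; rewrite inE /= in_itv /=.
  move=> [h_gt0 hlt]; rewrite h_gt0 /=.
  have rad_gt0 : 0 < u ^+ 2 - v ^+ 2 * (x - s) ^+ 2.
    by have := exprn_gt0 2 h_gt0; lra.
  by rewrite -[h in h < _]gtr0_norm // -sqrtr_sqr ltr_sqrt //; lra.
move=> /andP[h_gt0 hlt]; split=> //.
have : 0 < Num.sqrt (u ^+ 2 - v ^+ 2 * (x - s) ^+ 2) by exact: lt_trans hlt.
rewrite sqrtr_gt0 => rad_gt0.
by move: hlt; rewrite -[h in h < _]gtr0_norm // -sqrtr_sqr ltr_sqrt //; lra.
Qed.

Lemma leb2_Eset_integral (R : realType) (s v u : R) :
  leb2 (Eset s v u) =
  (\int[lebesgue_measure]_x (Num.sqrt (u ^+ 2 - v ^+ 2 * (x - s) ^+ 2))%:E)%E.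
Proof.
rewrite /leb2 /product_measure1 /=; apply: eq_integral => x _ /=.
rewrite xsection_Eset lebesgue_measure_itv /= lte_fin sqrtr_gt0.
case: ifPn => [_|]; first by rewrite oppr0 adde0.
by rewrite -leNgt => /ler0_sqrtr ->.
Qed.

Lemma integral_chord_itv (R : realType) (s v u : R) : 0 < v -> 0 < u ->
  (\int[lebesgue_measure]_x (Num.sqrt (u ^+ 2 - v ^+ 2 * (x - s) ^+ 2))%:E =
   \int[lebesgue_measure]_(x in `[(s - u / v)%R, (s + u / v)%R])
     (Num.sqrt (u ^+ 2 - v ^+ 2 * (x - s) ^+ 2))%:E)%E.
Proof.
move=> v_gt0 u_gt0; rewrite [RHS]integral_mkcond; apply: eq_integral => x _.
rewrite patchE; case: ifPn => // /negP; rewrite inE /= in_itv /= => x_out.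
have uv_gt0 : 0 < u / v by rewrite divr_gt0.
have uE : u = v * (u / v) by rewrite mulrC divfK ?gt_eqF.
suff far : (u / v) ^+ 2 < (x - s) ^+ 2.
  by rewrite ler0_sqrtr // {1}uE exprMn subr_le0 ler_wpM2l ?exprn_ge0 ?ltW.
have : u / v < `|x - s| by rewrite ltNge ler_norml; apply/negP => xs; apply: x_out; lra.
by rewrite -[(x - s) ^+ 2]real_normK ?num_real // ltr_sqr ?nnegrE ?normr_ge0 ?ltW.
Qed.

Lemma integral_chord_sin_subst (R : realType) (s v u : R) : 0 < v -> 0 < u ->
  (\int[lebesgue_measure]_(x in `[(s - u / v)%R, (s + u / v)%R])
     (Num.sqrt (u ^+ 2 - v ^+ 2 * (x - s) ^+ 2))%:E =
   \int[lebesgue_measure]_(t in `[(- (pi / 2))%R, (pi / 2)%R]) (u ^+ 2 / v * cos t ^+ 2)%:E)%E.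
Proof.
move=> v_gt0 u_gt0; set c := u / v; have c_gt0 : 0 < c by rewrite divr_gt0.
pose F t := s + c * sin t.
have F_derive (t : R) : is_derive t (1 : R) F (c * cos t).
  have -> : F = (cst s + c \*: (@sin R))%R by apply/funext.
  have F' := is_deriveD (is_derive_cst s t 1) (is_deriveZ c (is_derive_sin t)).
  by apply: (is_derive_eq F'); rewrite add0r.
have F'E : (F^`())%classic = fun t => c * cos t.
  by apply/funext => t; rewrite derive1E; apply: derive_val.
have F_cont (t : R) : F x @[x --> t] --> F t.
  by apply: cvgD; [exact: cvg_cst | apply: cvgM; [exact: cvg_cst | exact: continuous_sin]].
have F'_cont (t : R) : (F^`())%classic x @[x --> t] --> (F^`())%classic t.
  by rewrite F'E; apply: cvgM; [exact: cvg_cst | exact: continuous_cos].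
have F_lo : F (- (pi / 2)) = s - c by rewrite /F sinN sin_pihalf mulrN1.
have F_hi : F (pi / 2) = s + c by rewrite /F sin_pihalf mulr1.
have chord_cont : continuous (fun x : R => Num.sqrt (u ^+ 2 - v ^+ 2 * (x - s) ^+ 2)).
  move=> x; apply: (continuous_comp (f := fun x => u ^+ 2 - v ^+ 2 * (x - s) ^+ 2)).
    apply: cvgB; first exact: cvg_cst.
    apply: cvgM; first exact: cvg_cst.
    apply: (continuous_comp (f := fun x => x - s) (g := fun x => x ^+ 2)).
      by apply: cvgB; [exact: cvg_id | exact: cvg_cst].
    exact: exprn_continuous.
  exact: sqrt_continuous.
rewrite -F_lo -F_hi integration_by_substitution_increasing.
- apply: eq_integral => t; rewrite inE /= in_itv /= => t_pihalf.
  congr (_%:E); rewrite [LHS]/GRing.mul /= F'E /F (addrC s) addrK.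
  (* [u cos t >= 0] on [[-pi/2, pi/2]], so the square root is exactly [u cos t] *)
  have -> : u ^+ 2 - v ^+ 2 * (c * sin t) ^+ 2 = (u * cos t) ^+ 2.
    by rewrite [RHS]exprMn cos2sin2 /c; field; rewrite gt_eqF.
  rewrite sqrtr_sqr ger0_norm; last exact: mulr_ge0 (ltW u_gt0) (cos_ge0_pihalf t_pihalf).
  by rewrite /c; field; rewrite gt_eqF.
- by have := pi_ge0 R; lra.
- by move=> x y x_in y_in xy; rewrite /F ltrD2l ltr_pM2l // ltr_sin.
- by move=> x _; exact: F'_cont.
- by apply/cvg_ex; exists ((F^`())%classic (- (pi / 2))); exact: cvg_at_right_filter.
- by apply/cvg_ex; exists ((F^`())%classic (pi / 2)); exact: cvg_at_left_filter.
- split; first by move=> x _; apply: ex_derive.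
  + exact: cvg_at_right_filter.
  + exact: cvg_at_left_filter.
- exact: continuous_subspaceT.
Qed.

Lemma integral_cos2_pihalf (R : realType) (K : R) :
  (\int[lebesgue_measure]_(t in `[(- (pi / 2))%R, (pi / 2)%R]) (K * cos t ^+ 2)%:E =
   (K * (pi / 2))%:E)%E.
Proof.
pose G t := K / 2 * (t + sin t * cos t).
have G_derive (t : R) : is_derive t (1 : R) G (K * cos t ^+ 2).
  have -> : G = ((K / 2) \*: (id + (@sin R) * (@cos R)))%R by apply/funext.
  have G' := is_deriveZ (K / 2) (is_deriveD (is_derive_id t (1 : R))
                (is_deriveM (is_derive_sin t) (is_derive_cos t))).
  apply: (is_derive_eq G').
  change (K / 2 * (1 + (sin t * - sin t + cos t * cos t)) = K * cos t ^+ 2).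
  by rewrite -[cos t * cos t]expr2 cos2sin2; field.
have G_cont (t : R) : G x @[x --> t] --> G t.
  exact/differentiable_continuous/derivable1_diffP/ex_derive.
rewrite (@continuous_FTC2 _ _ G).
- by rewrite /G sinN cosN sin_pihalf cos_pihalf -EFinB; congr (_%:E); field.
- by have := pi_gt0 R; lra.
- apply: continuous_subspaceT => x.
  apply: cvgM; first exact: cvg_cst.
  apply: (continuous_comp (f := @cos R) (g := fun x => x ^+ 2)); first exact: continuous_cos.
  exact: exprn_continuous.
- split; first by move=> x _; apply: ex_derive.
  + exact: cvg_at_right_filter.
  + exact: cvg_at_left_filter.
- by move=> x _; rewrite derive1E; apply: derive_val.
Qed.

Lemma leb2_Eset (R : realType) (s v u : R) : 0 < v -> 0 < u ->
  leb2 (Eset s v u) = (pi * u ^+ 2 / (2 * v))%:E.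
Proof.
move=> v_gt0 u_gt0.
rewrite leb2_Eset_integral integral_chord_itv // integral_chord_sin_subst //.
by rewrite integral_cos2_pihalf; congr (_%:E); field; rewrite gt_eqF.
Qed.

Lemma measurable_Eset (R : realType) (s v u : R) : measurable (Eset s v u : set (plane R)).
Proof.
have quad_mfun : measurable_fun setT (fun p : plane R => v ^+ 2 * (p.1 - s) ^+ 2 + p.2 ^+ 2).
  apply: measurable_funD; last by apply: measurable_funX; exact: measurable_snd.
  apply: measurable_funM; first exact: measurable_cst.
  by apply: measurable_funX; apply: measurable_funB; [exact: measurable_fst | exact: measurable_cst].
rewrite (_ : Eset s v u = (fun p => v ^+ 2 * (p.1 - s) ^+ 2 + p.2 ^+ 2) @^-1` `]-oo, u ^+ 2[
                          `&` snd @^-1` `]0, +oo[); last first.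
  by apply/seteqP; split=> p /=; rewrite !in_itv /= ?andbT => -[].
apply: measurableI; rewrite -[X in measurable X]setTI.
  exact: quad_mfun.
exact: measurable_snd.
Qed.

Lemma head_intensity_Eset (R : realType) (v lam s u : R) : 0 < v -> 0 < u ->
  head_intensity v lam (Eset s v u) = (lam * pi * u ^+ 2)%:E.
Proof.
move=> v_gt0 u_gt0; rewrite /head_intensity (_ : _ `&` _ = Eset s v u); last first.
  by apply/setIidl => p [].
by rewrite leb2_Eset // -EFinM; congr (_%:E); field; rewrite gt_eqF.
Qed.

Lemma head_intensity_nonpos (R : realType) (v lam : R) :
  head_intensity v lam [set p : plane R | p.2 <= 0] = 0%E.
Proof.
rewrite /head_intensity (_ : _ `&` _ = set0); last first.
  by apply/seteqP; split=> // p [/= p_le0 /(le_lt_trans p_le0)]; rewrite ltxx.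
by rewrite /leb2 measure0 mule0.
Qed.

Section void_probabilities.
Variables (R : realType) (d : measure_display) (Omega : measurableType d).
Variable P : probability Omega R.

Lemma poisson_pp_measurable_void (H : Omega -> set (plane R)) (mu : set (plane R) -> \bar R)
    (A : set (plane R)) :
  poisson_pp P H mu -> measurable A -> (mu A < +oo)%E ->
  measurable [set w | npoints (H w) A = 0%E].
Proof.
move=> [PPcount _] mA muA_fin; have [mcount _] := PPcount A mA muA_fin.
by rewrite -[X in measurable X]setTI; exact: mcount (emeasurable_set1 _).
Qed.

Lemma poisson_pp_void (H : Omega -> set (plane R)) (mu : set (plane R) -> \bar R)
    (A : set (plane R)) (m : R) :
  poisson_pp P H mu -> measurable A -> mu A = m%:E ->
  P [set w | npoints (H w) A = 0%E] = (expR (- m))%:E.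
Proof.
move=> [PPcount _] mA muA; have muA_fin : (mu A < +oo)%E by rewrite muA ltry.
have [_ /(_ 0%N)] := PPcount A mA muA_fin.
by rewrite muA /poisson_p expr0 mulr1 fact0 divr1.
Qed.

Lemma poisson_pp_ae_void (H : Omega -> set (plane R)) (mu : set (plane R) -> \bar R)
    (A : set (plane R)) :
  poisson_pp P H mu -> measurable A -> mu A = 0%E ->
  {ae P, forall w, H w `&` A = set0}.
Proof.
move=> PP mA muA0.
have mvoid : measurable [set w | npoints (H w) A = 0%E].
  by apply: poisson_pp_measurable_void PP mA _; rewrite muA0 ltry.
exists (~` [set w | npoints (H w) A = 0%E]); split.
- exact: measurableC.
- by rewrite probability_setC // (poisson_pp_void PP mA muA0) oppr0 expR0 subee.
- by move=> w /= not_void /npoints_eq0.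
Qed.

Lemma ae_heads_pos (H : Omega -> set (plane R)) (v lam : R) :
  poisson_pp P H (head_intensity v lam) -> {ae P, forall w, forall p, H w p -> 0 < p.2}.
Proof.
move=> PP; have nonpos_mble : measurable [set p : plane R | p.2 <= 0].
  rewrite (_ : [set p | _] = setT `&` snd @^-1` `]-oo, 0]); last first.
    by apply/seteqP; split=> p /=; rewrite in_itv //= => -[].
  exact: measurable_snd (measurable_itv _).
apply: filterS (poisson_pp_ae_void PP nonpos_mble (head_intensity_nonpos v lam)).
move=> w no_nonpos p Hp; rewrite ltNge; apply/negP => p_le0.
by have : (H w `&` [set p | p.2 <= 0]) p by []; rewrite no_nonpos.
Qed.

Lemma indep_pp_void (H1 H2 : Omega -> set (plane R)) (A B : set (plane R)) :
  indep_pp P H1 H2 -> measurable A -> measurable B ->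
  P ([set w | npoints (H1 w) A = 0%E] `&` [set w | npoints (H2 w) B = 0%E]) =
  (P [set w | npoints (H1 w) A = 0%E] * P [set w | npoints (H2 w) B = 0%E])%E.
Proof.
move=> indep mA mB.
have bigcap1 (E : set Omega) : \bigcap_(i in [set: 'I_1]) E = E.
  by apply/seteqP; split=> [w /(_ ord0 I) | w Ew i _].
have := indep 1%N 1%N (fun=> A) (fun=> 0%E) (fun=> B) (fun=> 0%E) (fun=> mA) (fun=> mB).
by rewrite /= !bigcap1.
Qed.

End void_probabilities.

Theorem lemma7p4 (R : realType) (d : measure_display) (Omega : measurableType d)
  (P : probability Omega R) (lam1 lam2 v1 v2 : R)
  (H1 H2 : Omega -> set (plane R)) :
  0 < lam1 -> 0 < lam2 -> 0 < v1 -> 0 < v2 ->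
  poisson_pp P H1 (head_intensity v1 lam1) ->
  poisson_pp P H2 (head_intensity v2 lam2) ->
  indep_pp P H1 H2 ->
  {ae P, forall w,
     forall s u, 0 < u -> on_some_bird v1 v2 (H1 w) (H2 w) s u ->
       ((s, u) \in envelope v1 v2 (H1 w) (H2 w) <->
        (npoints (H1 w) (Eset s v1 u) = 0%E /\ npoints (H2 w) (Eset s v2 u) = 0%E))} /\
  (forall s u, 0 < u ->
     P [set w | npoints (H1 w) (Eset s v1 u) = 0%E /\ npoints (H2 w) (Eset s v2 u) = 0%E]
     = (expR (- ((lam1 + lam2) * pi * u ^+ 2)))%:E).
Proof.
move=> _ _ v1_gt0 v2_gt0 PP1 PP2 indep; split.
  apply: (filterS2 _ _ (ae_heads_pos PP1) (ae_heads_pos PP2)) => w pos1 pos2 s u u_gt0.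
  exact: envelope_iff_void.
move=> s u u_gt0.
rewrite (indep_pp_void indep (measurable_Eset _ _ _) (measurable_Eset _ _ _)).
rewrite (poisson_pp_void PP1 (measurable_Eset _ _ _) (head_intensity_Eset _ _ v1_gt0 u_gt0)).
rewrite (poisson_pp_void PP2 (measurable_Eset _ _ _) (head_intensity_Eset _ _ v2_gt0 u_gt0)).
by rewrite -EFinM -expRD; congr (expR _)%:E; ring.
Qed.
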